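(* Let $L$ be even and consider a periodic chain of $L$ spin-1's. For each bond $(j,j+1)$ let $\ket{J_{s,m}}$ ($0\le s\le2$, $-s\le m\le s$) denote the total-spin eigenstates of the two spins $j,j+1$ (total spin $s$, $S^z_j+S^z_{j+1}=m$). Let $\mathcal{E}\in\mathbb{R}$ and let $z^{(m,n)}_j\in\mathbb{C}$ ($m,n\in\{-2,-1,0\}$) with $z^{(m,n)}_j=\overline{z^{(n,m)}_j}$, and define $$H^{(a)}=\sum_{j=1}^L\hat h_{j,j+1},\quad \hat h_{j,j+1}=\mathcal{E}\big(\ket{J_{2,1}}\bra{J_{2,1}}+\ket{J_{2,2}}\bra{J_{2,2}}\big)+\sum_{m,n=-2}^{0}z^{(m,n)}_j\ket{J_{2,m}}\bra{J_{2,n}},$$ and $\mathcal{P}^{(a)}=\sum_{j=1}^L(-1)^j(S^+_j)^2$. Let $\ket G$ be the spin-1 AKLT ground state on the periodic chain, i.e. the (unique up to scale) state with no total-spin-2 component on any bond $(j,j+1)$. Then (i) $H^{(a)}\ket G=0$; (ii) $[H^{(a)},\mathcal{P}^{(a)}]\ket G=2\mathcal{E}\,\mathcal{P}^{(a)}\ket G$; (iii) $[[H^{(a)},\mathcal{P}^{(a)}],\mathcal{P}^{(a)}]\ket G=0$; (iv) $[[[H^{(a)},\mathcal{P}^{(a)}],\mathcal{P}^{(a)}],\mathcal{P}^{(a)}]=0$. Consequently $H^{(a)}(\mathcal{P}^{(a)})^n\ket G=2n\mathcal{E}(\mathcal{P}^{(a)})^n\ket G$ for all $n\ge0$.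
   Context: $S^+_j$ is the spin-1 raising operator on site $j$, indices taken mod $L$. The AKLT Hamiltonian is the special case $\mathcal{E}=1$, $z^{(m,n)}_j=\delta_{m,n}$. *)

From HB Require Import structures.
From mathcomp Require Import all_boot all_order all_algebra.
Set Implicit Arguments. Unset Strict Implicit. Unset Printing Implicit Defensive.
Import Order.TTheory GRing.Theory Num.Theory.
Local Open Scope ring_scope.

Section SpinChain.
Variable C : numClosedFieldType.
Variable L : nat.

(* local basis of a spin-1: k : 'I_3 represents S^z = k - 1, i.e. k = 1 + m. *)
Definition cfg := {ffun 'I_L -> 'I_3}.          (* sites 0..L-1 = paper's 1..L *)
Definition state := {ffun cfg -> C}.
Definition op := {ffun cfg * cfg -> C}.        (* matrix entries <x|A|y> *)

Definition opmul (A B : op) : op :=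
  [ffun p : cfg * cfg => \sum_(z : cfg) A (p.1, z) * B (z, p.2)].
Definition opapp (A : op) (v : state) : state :=
  [ffun x => \sum_(y : cfg) A (x, y) * v y].
Definition opscale (c : C) (A : op) : op := [ffun p => c * A p].
Definition stscale (c : C) (v : state) : state := [ffun x => c * v x].
Definition comm (A B : op) : op := opmul A B - opmul B A.

Definition nxt (j : 'I_L) : 'I_L := ordS j.

Definition site_op (j : 'I_L) (s : 'I_3 -> 'I_3 -> C) : op :=
  [ffun p : cfg * cfg => if [forall i, (i != j) ==> (p.1 i == p.2 i)]
             then s (p.1 j) (p.2 j) else 0].

(* an operator acting on the bond (j, j+1): t k1' k2' k1 k2 = <k1' k2'|t|k1 k2> *)
Definition bond_op (j : 'I_L) (t : 'I_3 -> 'I_3 -> 'I_3 -> 'I_3 -> C) : op :=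
  [ffun p : cfg * cfg => if [forall i, ((i != j) && (i != nxt j)) ==> (p.1 i == p.2 i)]
             then t (p.1 j) (p.1 (nxt j)) (p.2 j) (p.2 (nxt j)) else 0].

Definition ketbra (a b : 'I_3 -> 'I_3 -> C) : 'I_3 -> 'I_3 -> 'I_3 -> 'I_3 -> C :=
  fun k1' k2' k1 k2 => a k1' k2' * (b k1 k2)^*.

(* single-site spin-1 raising operator: S^+ |m> = sqrt(2 - m(m+1)) |m+1> *)
Definition splus1 (k' k : 'I_3) : C :=
  let m : C := k%:R - 1 in
  if k' == k.+1 :> nat then sqrtC (2 - m * (m + 1)) else 0.
Definition Splus (j : 'I_L) : op := site_op j splus1.

(* Two-site total-spin-2 eigenstates |J_{2,M}> with M = K - 2, K = 0..4
   (Clebsch-Gordan coefficients <1 m1; 1 m2 | 2 M>, k_i = 1 + m_i):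
     <k1 k2|J_{2,M}> = [k1+k2 = K] sqrt( C(2,k1) C(2,k2) / C(4,K) ).
   Explicitly: J_{2,2} = |1,1>, J_{2,1} = (|1,0>+|0,1>)/sqrt2,
   J_{2,0} = (|1,-1> + 2|0,0> + |-1,1>)/sqrt6,
   J_{2,-1} = (|0,-1>+|-1,0>)/sqrt2, J_{2,-2} = |-1,-1>. *)
Definition J2 (K : nat) (k1 k2 : 'I_3) : C :=
  if (k1 + k2 == K)%N
  then sqrtC (('C(2, k1) * 'C(2, k2))%:R / ('C(4, K))%:R) else 0.

(* the bond Hamiltonian; z j a b = z^{(a-2, b-2)}_j for a, b : 'I_3 *)
Definition hbond (E : C) (z : 'I_L -> 'I_3 -> 'I_3 -> C) (j : 'I_L) : op :=
  opscale E (bond_op j (ketbra (J2 3) (J2 3)) + bond_op j (ketbra (J2 4) (J2 4)))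
  + \sum_(a < 3) \sum_(b < 3) opscale (z j a b) (bond_op j (ketbra (J2 a) (J2 b))).

Definition Ham (E : C) (z : 'I_L -> 'I_3 -> 'I_3 -> C) : op :=
  \sum_(j < L) hbond E z j.

(* P^(a) = sum_{j=1}^L (-1)^j (S^+_j)^2, paper's site j is our j-1 *)
Definition Pa : op :=
  \sum_(j < L) opscale ((-1) ^+ (j.+1)) (opmul (Splus j) (Splus j)).

Definition AKLT_gs (G : state) : Prop :=
  forall (j : 'I_L) (K : 'I_5), opapp (bond_op j (ketbra (J2 K) (J2 K))) G = 0.

End SpinChain.

From HB Require Import structures.
From mathcomp Require Import all_boot all_order all_algebra.
From mathcomp Require Import ring zify.
From Stdlib Require Import FunctionalExtensionality.
Import Order.TTheory GRing.Theory Num.Theory.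
Local Open Scope ring_scope.

(** Every operator in the statement is a sum of local pieces: the Hamiltonian
   is a sum of bond operators h_{j,j+1}, and P^(a) = sum_j (-1)^(j+1) Q_j with
   Q_j = (S^+_j)^2 = 2|+1><-1| on site j.  The proof reduces everything to the
   9-dimensional space of a single bond:

   With D = Q (x) 1 - 1 (x) Q, the bond Hamiltonian h
     kills the four spin-0/spin-1 states a of a bond, h acts as E on D a,
     D (D a) = 0, and D^3, D h D^2, D^2 h D all vanish.  Hence
     [h,D] - E D, [[h,D],D] kill the spin-0/1 states and [[[h,D],D],D] = 0.
   - Chain algebra.  Site operators away from a bond commute with it, and
     because L is even the signs of P alternate around the whole ring, so
     [bond_op j t, P] = bond_op j ((-1)^(j+1) [t, D]); moreover
     sum_j (-1)^(j+1) (Q_j - Q_(j+1)) = 2 P.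
   - Ground state.  A bond operator killing the spin-0/1 states of its bond
     factors through the spin-2 projector, hence kills the AKLT state G.
   - Tower.  For any H, P, G with H G = 0, [H,P] G = c P G, [[H,P],P] G = 0
     and [[[H,P],P],P] = 0, we get H P^n G = n c P^n G. *)

Set Implicit Arguments.
Unset Strict Implicit.
Unset Printing Implicit Defensive.

Definition o0 : 'I_3 := @Ordinal 3 0 isT.
Definition o1 : 'I_3 := @Ordinal 3 1 isT.
Definition o2 : 'I_3 := @Ordinal 3 2 isT.

Lemma I3P (i : 'I_3) : [\/ i = o0, i = o1 | i = o2].
Proof.
case: i => [[|[|[|//]]] Hi]; [constructor 1|constructor 2|constructor 3]; exact: val_inj.
Qed.

Ltac funext_all := repeat (apply: functional_extensionality => ?).
Ltac case3 x := case: (I3P x) => ->.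
Ltac funext_cases2 := let a := fresh "a" in let b := fresh "b" in
  apply: functional_extensionality => a; apply: functional_extensionality => b;
  case3 a; case3 b.

Section SpinOneChain.
Variable C : numClosedFieldType.

Lemma sum3 (F : 'I_3 -> C) : \sum_(i < 3) F i = F o0 + F o1 + F o2.
Proof.
rewrite !big_ord_recr big_ord0 /= add0r.
by congr (F _ + F _ + F _); apply: val_inj.
Qed.

(* Two-site wavefunctions <k1 k2|v> and two-site operators <a b|t|c d>. *)
Definition vec2 := 'I_3 -> 'I_3 -> C.
Definition op2 := 'I_3 -> 'I_3 -> 'I_3 -> 'I_3 -> C.

Definition app2 (t : op2) (v : vec2) : vec2 :=
  fun x1 x2 => \sum_(y1 < 3) \sum_(y2 < 3) t x1 x2 y1 y2 * v y1 y2.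
Definition mul2 (t u : op2) : op2 :=
  fun a b c d => \sum_(e < 3) \sum_(f < 3) t a b e f * u e f c d.
Definition dot2 (u v : vec2) : C := \sum_(y1 < 3) \sum_(y2 < 3) u y1 y2 * v y1 y2.
Definition sub2 (u w : vec2) : vec2 := fun a b => u a b - w a b.
Definition scale2 (c : C) (u : vec2) : vec2 := fun a b => c * u a b.
Definition zero2 : vec2 := fun _ _ => 0.
Definition outer2 (u v : vec2) : op2 := fun a b c d => u a b * v c d.
Definition opscale2 (c : C) (t : op2) : op2 := fun a b e f => c * t a b e f.

(* Integer coordinates of the spin-2 states: spin2 K is sqrt of the norm
   times |J_{2,K-2}>, see J2_spin2 below. *)
Definition spin2_coord (K : nat) (k1 k2 : 'I_3) : nat :=
  match K, val k1, val k2 with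
  | 0, 0, 0 => 1 | 1, 0, 1 => 1 | 1, 1, 0 => 1
  | 2, 0, 2 => 1 | 2, 1, 1 => 2 | 2, 2, 0 => 1
  | 3, 1, 2 => 1 | 3, 2, 1 => 1 | 4, 2, 2 => 1 | _, _, _ => 0 end.
Definition spin2 K : vec2 := fun k1 k2 => (spin2_coord K k1 k2)%:R.
Definition spin2_norm (K : nat) : C := match K with 1 | 3 => 1/2 | 2 => 1/6 | _ => 1 end.

(* The complementary states: spin-1 states (i = 0, 1, 3) and the singlet
   (i = 2), orthogonal to all spin2 K. *)
Definition low (i : nat) : vec2 := fun k1 k2 => match i, val k1, val k2 with
  | 0,0,1 => 1 | 0,1,0 => -1 | 1,0,2 => 1 | 1,2,0 => -1 | 2,0,2 => 1
  | 2,1,1 => -1 | 2,2,0 => 1 | 3,1,2 => 1 | 3,2,1 => -1 | _,_,_ => 0 end.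
Definition low_norm (i : nat) : C := match i with 2 => 1/3 | _ => 1/2 end.

Lemma two_site_resolution (t : op2) : t = fun x1 x2 y1 y2 =>
  \sum_(K < 5) spin2_norm K * app2 t (spin2 K) x1 x2 * spin2 K y1 y2
  + \sum_(i < 4) low_norm i * app2 t (low i) x1 x2 * low i y1 y2.
Proof.
apply: functional_extensionality => x1; apply: functional_extensionality => x2.
apply: functional_extensionality => y1; apply: functional_extensionality => y2.
rewrite !big_ord_recr !big_ord0 /= /app2 !sum3.
by case3 y1; case3 y2; rewrite /spin2 /low /spin2_norm /low_norm /=; field.
Qed.

(* (S^+)^2 = 2|+1><-1| on one site, and D = Q (x) 1 - 1 (x) Q on a bond. *)
Definition Qsite (a b : 'I_3) : C := if (val a == 2)%N && (val b == 0)%N then 2 else 0.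
Definition delta (a b : 'I_3) : C := if a == b then 1 else 0.
Definition Dbond : op2 := fun a b c d => Qsite a c * delta b d - delta a c * Qsite b d.

(* c [t, D], the bond part of a commutator with P. *)
Definition adD (c : C) (t : op2) : op2 :=
  fun a b e f => c * (mul2 t Dbond a b e f - mul2 Dbond t a b e f).

(* The bond Hamiltonian written in the spin2 basis; w a b is the coupling of
   |J_{2,a-2}><J_{2,b-2}| rescaled by the norms. *)
Definition hloc (E : C) (w : 'I_3 -> 'I_3 -> C) : op2 := fun x1 x2 y1 y2 =>
  E * (1/2 * (spin2 3 x1 x2 * spin2 3 y1 y2) + spin2 4 x1 x2 * spin2 4 y1 y2)
  + \sum_(a < 3) \sum_(b < 3) w a b * (spin2 a x1 x2 * spin2 b y1 y2).

Lemma Dbond_app (v : vec2) : app2 Dbond v = fun x1 x2 =>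
  (if (val x1 == 2)%N then 2 * v o0 x2 else 0)
  - (if (val x2 == 2)%N then 2 * v x1 o0 else 0).
Proof. funext_cases2; rewrite /app2 !sum3 /Dbond /Qsite /delta /=; ring. Qed.

Lemma hloc_app E w (v : vec2) : app2 (hloc E w) v = fun x1 x2 =>
  E * (1/2 * (spin2 3 x1 x2 * dot2 (spin2 3) v) + spin2 4 x1 x2 * dot2 (spin2 4) v)
  + \sum_(a < 3) \sum_(b < 3) w a b * (spin2 a x1 x2 * dot2 (spin2 b) v).
Proof. funext_all; rewrite /app2 /hloc /dot2 !sum3 /=; ring. Qed.

Lemma hloc_low E w i : (i < 4)%N -> app2 (hloc E w) (low i) = zero2.
Proof.
move=> hi; rewrite hloc_app /zero2 /dot2; funext_all; rewrite !sum3 /=.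
by case: i hi => [|[|[|[|//]]]] _; rewrite /low /spin2 /=; ring.
Qed.

(* D maps the spin-0/1 states to multiples of |J_{2,1}> and |J_{2,2}> ... *)
Definition Dlow (i : nat) : vec2 :=
  match i with 0 => scale2 2 (spin2 3) | 1 => scale2 4 (spin2 4) | _ => zero2 end.

Lemma Dbond_low i : (i < 4)%N -> app2 Dbond (low i) = Dlow i.
Proof.
move=> hi; rewrite Dbond_app /Dlow /scale2 /zero2.
by case: i hi => [|[|[|[|//]]]] _; funext_cases2; rewrite /low /spin2 /=; ring.
Qed.

Lemma hloc_Dlow E w i : (i < 4)%N -> app2 (hloc E w) (Dlow i) = scale2 E (Dlow i).
Proof.
move=> hi; rewrite hloc_app /dot2; funext_all; rewrite !sum3 /=.
by case: i hi => [|[|[|[|//]]]] _; rewrite /Dlow /scale2 /zero2 /spin2 /=; field.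
Qed.

Lemma Dbond_Dlow i : app2 Dbond (Dlow i) = zero2.
Proof.
rewrite Dbond_app /Dlow /scale2 /zero2.
by case: i => [|[|i]]; funext_cases2; rewrite /spin2 /=; ring.
Qed.

(* D^2 only reaches |+1,+1> = |J_{2,2}>, on which h acts as E. *)
Lemma Dbond2_app v : app2 Dbond (app2 Dbond v) = fun x1 x2 =>
  if (val x1 == 2)%N && (val x2 == 2)%N then -8 * v o0 o0 else 0.
Proof. rewrite !Dbond_app; funext_cases2; rewrite /=; ring. Qed.

Lemma hloc_top E w s :
  app2 (hloc E w) (fun x1 x2 => if (val x1 == 2)%N && (val x2 == 2)%N then s else 0)
  = fun x1 x2 => if (val x1 == 2)%N && (val x2 == 2)%N then E * s else 0.
Proof. rewrite hloc_app /dot2; funext_cases2; rewrite !sum3 /spin2 /=; ring. Qed.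

(* The image of D is orthogonal to the spin-2 states with S^z <= 0. *)
Lemma dot_spin2_Dbond (b : 'I_3) v : dot2 (spin2 b) (app2 Dbond v) = 0.
Proof. rewrite Dbond_app /dot2 !sum3; case3 b; rewrite /spin2 /=; ring. Qed.

(* The three words of degree 3 in D that survive in [[[h,D],D],D]. *)
Lemma Dbond3 v : app2 Dbond (app2 Dbond (app2 Dbond v)) = zero2.
Proof. rewrite Dbond2_app Dbond_app /zero2; funext_cases2; rewrite /=; ring. Qed.

Lemma Dbond_hloc_Dbond2 E w v :
  app2 Dbond (app2 (hloc E w) (app2 Dbond (app2 Dbond v))) = zero2.
Proof. rewrite Dbond2_app hloc_top Dbond_app /zero2; funext_cases2; rewrite /=; ring. Qed.

Lemma Dbond2_hloc_Dbond E w v :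
  app2 Dbond (app2 Dbond (app2 (hloc E w) (app2 Dbond v))) = zero2.
Proof.
rewrite Dbond2_app /zero2; funext_cases2; rewrite /= ?mulr0 //.
rewrite hloc_app !sum3 !dot_spin2_Dbond /spin2 /=; ring.
Qed.

Lemma app2_adD c t v :
  app2 (adD c t) v = scale2 c (sub2 (app2 t (app2 Dbond v)) (app2 Dbond (app2 t v))).
Proof. funext_all; rewrite /app2 /adD /mul2 /scale2 /sub2 !sum3; ring. Qed.
Lemma app2_subl t u v :
  app2 (fun a b e f => t a b e f - u a b e f) v = sub2 (app2 t v) (app2 u v).
Proof. funext_all; rewrite /app2 /sub2 !sum3; ring. Qed.
Lemma app2_opscale c t v : app2 (opscale2 c t) v = scale2 c (app2 t v).
Proof. funext_all; rewrite /app2 /opscale2 /scale2 !sum3; ring. Qed.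
Lemma app2_sub t u w : app2 t (sub2 u w) = sub2 (app2 t u) (app2 t w).
Proof. funext_all; rewrite /app2 /sub2 !sum3; ring. Qed.
Lemma app2_scale t c u : app2 t (scale2 c u) = scale2 c (app2 t u).
Proof. funext_all; rewrite /app2 /scale2 !sum3; ring. Qed.
Lemma app2_zero t : app2 t zero2 = zero2.
Proof. funext_all; rewrite /app2 /zero2 !sum3; ring. Qed.

Lemma adD_hloc_low c E w i : (i < 4)%N ->
  app2 (adD c (hloc E w)) (low i) = app2 (opscale2 (c * E) Dbond) (low i).
Proof.
move=> hi; rewrite app2_opscale app2_adD Dbond_low // hloc_Dlow // hloc_low // app2_zero.
by rewrite /sub2 /scale2 /zero2; funext_all; ring.
Qed.

Lemma adD2_hloc_low c E w i : (i < 4)%N ->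
  app2 (adD c (adD c (hloc E w))) (low i) = zero2.
Proof.
move=> hi; rewrite !app2_adD Dbond_low // hloc_low // Dbond_Dlow app2_zero hloc_Dlow //.
rewrite !(app2_sub, app2_scale, Dbond_Dlow, app2_zero).
by rewrite /sub2 /scale2 /zero2; funext_all; ring.
Qed.

Lemma op2_zero (t : op2) : (forall v, app2 t v = zero2) -> t = fun _ _ _ _ => 0.
Proof.
move=> H; apply: functional_extensionality => x1; apply: functional_extensionality => x2.
apply: functional_extensionality => y1; apply: functional_extensionality => y2.
have := f_equal (fun f => f x1 x2) (H (fun a b => if (a == y1) && (b == y2) then 1 else 0)).
rewrite /app2 !sum3 /zero2; case3 y1; case3 y2; rewrite /= => <-; ring.
Qed.

Lemma adD3_hloc c E w : adD c (adD c (adD c (hloc E w))) = fun _ _ _ _ => 0.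
Proof.
apply: op2_zero => v; rewrite !app2_adD.
rewrite !(app2_sub, app2_scale, Dbond3, Dbond_hloc_Dbond2, Dbond2_hloc_Dbond, app2_zero).
by rewrite /sub2 /scale2 /zero2; funext_all; ring.
Qed.

Lemma op2_spin2_expansion t : (forall i, (i < 4)%N -> app2 t (low i) = zero2) ->
  t = fun a b c d => \sum_(K < 5)
        outer2 (scale2 (spin2_norm K) (app2 t (spin2 K))) (spin2 K) a b c d.
Proof.
move=> ht; rewrite {1}(two_site_resolution t); funext_all.
rewrite [X in _ + X]big1 ?addr0; last by move=> i _; rewrite ht // /zero2; ring.
by apply: eq_bigr => K _; rewrite /outer2 /scale2.
Qed.

(* The normalisation of the Clebsch-Gordan states J2 of the statement:
   J2 K = J2_scale K * spin2 K with J2_scale K real and of square spin2_norm K. *)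
Definition J2_row (K : nat) : 'I_3 := match K with 0 | 1 | 2 => o0 | 3 => o1 | _ => o2 end.
Definition J2_col (K : nat) : 'I_3 := match K with 0 => o0 | 1 => o1 | _ => o2 end.
Definition J2_scale (K : nat) : C := J2 C K (J2_row K) (J2_col K).

Lemma J2_spin2 K k1 k2 : (K < 5)%N -> J2 C K k1 k2 = J2_scale K * spin2 K k1 k2.
Proof.
move=> hK; rewrite /J2_scale.
case: K hK => [|[|[|[|[|//]]]]] _; case3 k1; case3 k2; rewrite /J2 /spin2 /= ?mulr0 ?mulr1 //.
have e : ('C(2, 1) * 'C(2, 1))%:R / 'C(4, 2)%:R =
  2%:R ^+ 2 * (('C(2, 0) * 'C(2, 2))%:R / 'C(4, 2)%:R) :> C.
  by rewrite !natrM bin0 bin1 binn; ring.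
rewrite e sqrtCM; [|by rewrite nnegrE exprn_ge0 ?ler0n|by rewrite nnegrE divr_ge0 ?ler0n].
by rewrite sqrCK ?ler0n // mulrC.
Qed.

Lemma J2_scale_conj K : (J2_scale K)^* = J2_scale K.
Proof.
rewrite /J2_scale /J2; case: ifP => _; last by rewrite rmorph0.
by apply: geC0_conj; rewrite sqrtC_ge0 divr_ge0 // ler0n.
Qed.

Lemma J2_scale_sq K : (K < 5)%N -> J2_scale K * (J2_scale K)^* = spin2_norm K.
Proof.
move=> hK; rewrite J2_scale_conj -expr2 /J2_scale.
case: K hK => [|[|[|[|[|//]]]]] _; rewrite /J2 /spin2_norm /= sqrtCK !natrM ?bin0 ?bin1 ?binn.
- by field.
- by field.
- by rewrite (_ : 'C(4, 2) = 6%N) //; field.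
- by rewrite (_ : 'C(4, 3) = 4%N) //; field.
- by field.
Qed.

Lemma ketbra_J2 K : (K < 5)%N ->
  ketbra (J2 C K) (J2 C K) = fun a b c d => spin2_norm K * (spin2 K a b * spin2 K c d).
Proof.
move=> hK; funext_all; rewrite /ketbra !J2_spin2 // rmorphM /= -(J2_scale_sq hK).
by rewrite /spin2 conjC_nat; ring.
Qed.

Lemma outer2_spin2_proj u K : (K < 5)%N ->
  mul2 (outer2 u (spin2 K)) (ketbra (J2 C K) (J2 C K)) = outer2 u (spin2 K).
Proof.
move=> hK; rewrite ketbra_J2 //.
apply: functional_extensionality => x1; apply: functional_extensionality => x2.
apply: functional_extensionality => y1; apply: functional_extensionality => y2.
rewrite /mul2 /outer2 !sum3.
by case: K hK => [|[|[|[|[|//]]]]] _; case3 y1; case3 y2; rewrite /spin2 /spin2_norm /=; field.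
Qed.

Section Chain.
Variable L : nat.
Local Notation cfg := (cfg L).
Local Notation op := (op C L).
Local Notation state := (state C L).
Implicit Types (j k : 'I_L) (x y : cfg) (v w : state).

Lemma opapp_mul (A B : op) v : opapp (opmul A B) v = opapp A (opapp B v).
Proof.
apply/ffunP => x; rewrite !ffunE.
under [RHS]eq_bigr do rewrite ffunE big_distrr.
rewrite exchange_big /=; apply: eq_bigr => y _.
rewrite ffunE big_distrl /=; apply: eq_bigr => z _.
by rewrite mulrA.
Qed.
Lemma opappBl (A B : op) v : opapp (A - B) v = opapp A v - opapp B v.
Proof.
apply/ffunP => x; rewrite !ffunE -sumrB; apply: eq_bigr => y _.
by rewrite !ffunE mulrBl.
Qed.
Lemma opappDl (A B : op) v : opapp (A + B) v = opapp A v + opapp B v.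
Proof.
apply/ffunP => x; rewrite !ffunE -big_split; apply: eq_bigr => y _.
by rewrite !ffunE mulrDl.
Qed.
Lemma opapp0l v : opapp (0 : op) v = 0.
Proof. apply/ffunP => x; rewrite !ffunE big1 // => y _; by rewrite ffunE mul0r. Qed.
Lemma opapp_suml n (F : 'I_n -> op) v :
  opapp (\sum_(j < n) F j) v = \sum_(j < n) opapp (F j) v.
Proof.
elim: n F => [|n IH] F; first by rewrite !big_ord0 opapp0l.
by rewrite !big_ord_recr opappDl IH.
Qed.
Lemma opappZl c (A : op) v : opapp (opscale c A) v = stscale c (opapp A v).
Proof.
apply/ffunP => x; rewrite !ffunE big_distrr; apply: eq_bigr => y _.
by rewrite ffunE -mulrA.
Qed.
Lemma opappZr (A : op) c v : opapp A (stscale c v) = stscale c (opapp A v).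
Proof.
apply/ffunP => x; rewrite !ffunE big_distrr; apply: eq_bigr => y _.
by rewrite ffunE mulrCA.
Qed.
Lemma opapp0r (A : op) : opapp A 0 = 0.
Proof. apply/ffunP => x; rewrite !ffunE big1 // => y _; by rewrite ffunE mulr0. Qed.
Lemma opapp_comm (A B : op) v :
  opapp (comm A B) v = opapp A (opapp B v) - opapp B (opapp A v).
Proof. by rewrite /comm opappBl !opapp_mul. Qed.

Lemma stscale_sum c n (F : 'I_n -> state) :
  stscale c (\sum_(j < n) F j) = \sum_(j < n) stscale c (F j).
Proof.
apply/ffunP => x; rewrite !ffunE !sum_ffunE big_distrr.
by apply: eq_bigr => j _; rewrite ffunE.
Qed.

Lemma opapp_swap (A B : op) v : opapp A (opapp B v) = opapp B (opapp A v) + opapp (comm A B) v.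
Proof. by rewrite opapp_comm addrC subrK. Qed.

Lemma opmul_sumr (A : op) n (F : 'I_n -> op) :
  opmul A (\sum_(k < n) F k) = \sum_(k < n) opmul A (F k).
Proof.
apply/ffunP => p; rewrite ffunE sum_ffunE.
under eq_bigr do rewrite sum_ffunE big_distrr /=.
rewrite exchange_big; apply: eq_bigr => k _; by rewrite ffunE.
Qed.
Lemma opmul_suml (B : op) n (F : 'I_n -> op) :
  opmul (\sum_(k < n) F k) B = \sum_(k < n) opmul (F k) B.
Proof.
apply/ffunP => p; rewrite ffunE sum_ffunE.
under eq_bigr do rewrite sum_ffunE big_distrl /=.
rewrite exchange_big; apply: eq_bigr => k _; by rewrite ffunE.
Qed.
Lemma comm_suml n (F : 'I_n -> op) B :
  comm (\sum_(j < n) F j) B = \sum_(j < n) comm (F j) B.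
Proof. by rewrite /comm opmul_suml opmul_sumr -sumrB. Qed.
Lemma comm_sumr_scale (A : op) n (c : 'I_n -> C) (F : 'I_n -> op) :
  comm A (\sum_(k < n) opscale (c k) (F k)) = \sum_(k < n) opscale (c k) (comm A (F k)).
Proof.
rewrite /comm opmul_suml opmul_sumr -sumrB; apply: eq_bigr => k _.
apply/ffunP => p; rewrite !ffunE mulrBr !big_distrr /=; congr (_ - _).
  by apply: eq_bigr => z _; rewrite ffunE mulrCA.
by apply: eq_bigr => z _; rewrite ffunE mulrA.
Qed.

Definition bond_fixed j x y : bool :=
  [forall i, ((i != j) && (i != nxt j)) ==> (x i == y i)].
Definition site_fixed k x y : bool := [forall i, (i != k) ==> (x i == y i)].

Lemma bond_opE j (t : op2) x y : bond_op j t (x, y) =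
  if bond_fixed j x y then t (x j) (x (nxt j)) (y j) (y (nxt j)) else 0.
Proof. by rewrite ffunE. Qed.
Lemma site_opE k (s : 'I_3 -> 'I_3 -> C) x y : site_op k s (x, y) =
  if site_fixed k x y then s (x k) (y k) else 0.
Proof. by rewrite ffunE. Qed.

Lemma bond_op_ext j (t u : op2) : (forall a b c d, t a b c d = u a b c d) ->
  bond_op j t = bond_op j u.
Proof. by move=> h; apply/ffunP => -[x y]; rewrite !bond_opE h. Qed.
Lemma bond_opD j (t u : op2) :
  bond_op j t + bond_op j u = bond_op j (fun a b c d => t a b c d + u a b c d).
Proof. apply/ffunP => -[x y]; rewrite !ffunE /=; case: ifP => _ //; by rewrite addr0. Qed.
Lemma bond_opB j (t u : op2) :
  bond_op j t - bond_op j u = bond_op j (fun a b c d => t a b c d - u a b c d).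
Proof. apply/ffunP => -[x y]; rewrite !ffunE /=; case: ifP => _ //; by rewrite subr0. Qed.
Lemma bond_opZ j c (t : op2) : opscale c (bond_op j t) = bond_op j (opscale2 c t).
Proof. apply/ffunP => -[x y]; rewrite !ffunE /=; case: ifP => _ //; by rewrite mulr0. Qed.
Lemma bond_op_sum j n (F : 'I_n -> op2) :
  \sum_(a < n) bond_op j (F a) = bond_op j (fun a1 a2 b1 b2 => \sum_(a < n) F a a1 a2 b1 b2).
Proof.
apply/ffunP => -[x y]; rewrite sum_ffunE !bond_opE.
under eq_bigr do rewrite bond_opE.
by case: ifP => _ //; rewrite big1.
Qed.
Lemma bond_op0 j : bond_op j (fun _ _ _ _ => 0 : C) = 0.
Proof. by apply/ffunP => -[x y]; rewrite !ffunE /=; case: ifP. Qed.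

Lemma sum_supported (F : cfg -> C) z0 : (forall z, z != z0 -> F z = 0) ->
  \sum_z F z = F z0.
Proof. by move=> h; rewrite (bigD1 z0) //= big1 ?addr0. Qed.

Definition setbond j x (e f : 'I_3) : cfg :=
  [ffun i => if i == j then e else if i == nxt j then f else x i].

Lemma setbond_j j x e f : setbond j x e f j = e.
Proof. by rewrite ffunE eqxx. Qed.
Lemma setbond_nxt j x e f : nxt j != j -> setbond j x e f (nxt j) = f.
Proof. by move=> h; rewrite ffunE (negbTE h) eqxx. Qed.
Lemma bond_fixed_setbond j x e f : bond_fixed j x (setbond j x e f).
Proof.
apply/forallP => i; apply/implyP => /andP [h1 h2]; by rewrite ffunE (negbTE h1) (negbTE h2).
Qed.
Lemma setbond_fixed j x y e f : bond_fixed j x y -> bond_fixed j (setbond j x e f) y.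
Proof.
move=> /forallP H; apply/forallP => i; apply/implyP => /andP [h1 h2].
by rewrite ffunE (negbTE h1) (negbTE h2); apply: (implyP (H i)); rewrite h1 h2.
Qed.
Lemma bond_fixed_trans j x y z : bond_fixed j x y -> bond_fixed j y z -> bond_fixed j x z.
Proof.
move=> /forallP H1 /forallP H2; apply/forallP => i; apply/implyP => h.
by rewrite (eqP (implyP (H1 i) h)) (implyP (H2 i) h).
Qed.
Lemma setbond_self j x z : bond_fixed j x z -> z = setbond j x (z j) (z (nxt j)).
Proof.
move=> /forallP H; apply/ffunP => i; rewrite ffunE.
case: eqP => [->|/eqP h1] //; case: eqP => [->|/eqP h2] //.
by have := implyP (H i); rewrite h1 h2 => /(_ isT) /eqP.
Qed.

Lemma sum_over_bond j x (F : cfg -> C) : nxt j != j ->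
  (forall z, ~~ bond_fixed j x z -> F z = 0) ->
  \sum_z F z = \sum_(e < 3) \sum_(f < 3) F (setbond j x e f).
Proof.
move=> hj hF.
have pick e f : F (setbond j x e f) = \sum_z (if z == setbond j x e f then F z else 0).
  by rewrite -big_mkcond big_pred1_eq.
under [RHS]eq_bigr do under eq_bigr do rewrite pick.
under [RHS]eq_bigr do rewrite exchange_big.
rewrite exchange_big; apply: eq_bigr => z _.
case: (boolP (bond_fixed j x z)) => hz; last first.
  rewrite hF //; symmetry; apply: big1 => e _; apply: big1 => f _; by case: ifP.
rewrite (bigD1 (z j)) //= [X in _ + X]big1 ?addr0; last first.
  move=> e he; apply: big1 => f _; case: eqP => // hze.
  by move: he; rewrite hze setbond_j eqxx.
rewrite (bigD1 (z (nxt j))) //= [X in _ + X]big1 ?addr0; last first.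
  move=> f hf; case: eqP => // hze.
  by move: hf; rewrite hze setbond_nxt // eqxx.
by rewrite -setbond_self // eqxx.
Qed.

Lemma bond_mul j (t u : op2) : nxt j != j ->
  opmul (bond_op j t) (bond_op j u) = bond_op j (mul2 t u).
Proof.
move=> hj; apply/ffunP => -[x y]; rewrite ffunE /= bond_opE.
case: (boolP (bond_fixed j x y)) => hxy; last first.
  apply: big1 => z _; rewrite !bond_opE.
  case: (boolP (bond_fixed j x z)) => h1; case: (boolP (bond_fixed j z y)) => h2;
    rewrite ?mul0r ?mulr0 //.
  by move: hxy; rewrite (bond_fixed_trans h1 h2).
rewrite (@sum_over_bond j x) //; last first.
  by move=> z hz; rewrite bond_opE (negbTE hz) mul0r.
rewrite /mul2; apply: eq_bigr => e _; apply: eq_bigr => f _.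
by rewrite !bond_opE bond_fixed_setbond setbond_fixed // setbond_j setbond_nxt.
Qed.

Lemma site_fixed_left j x y : nxt j != j ->
  site_fixed j x y = bond_fixed j x y && (x (nxt j) == y (nxt j)).
Proof.
move=> hj; apply/idP/andP => [/forallP H|[/forallP H1 /eqP H2]].
  split; last by apply: (implyP (H (nxt j))).
  apply/forallP => i; apply/implyP => /andP [h1 _]; exact: (implyP (H i)).
apply/forallP => i; apply/implyP => h1.
case: (eqVneq i (nxt j)) => [->|h2]; first by rewrite H2.
by apply: (implyP (H1 i)); rewrite h1 h2.
Qed.
Lemma site_fixed_right j x y : nxt j != j ->
  site_fixed (nxt j) x y = bond_fixed j x y && (x j == y j).
Proof.
move=> hj; apply/idP/andP => [/forallP H|[/forallP H1 /eqP H2]].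
  split; last by apply: (implyP (H j)); rewrite eq_sym.
  apply/forallP => i; apply/implyP => /andP [_ h2]; exact: (implyP (H i)).
apply/forallP => i; apply/implyP => h2.
case: (eqVneq i j) => [->|h1]; first by rewrite H2.
by apply: (implyP (H1 i)); rewrite h1 h2.
Qed.

Lemma site_bondl j (s : 'I_3 -> 'I_3 -> C) : nxt j != j ->
  site_op j s = bond_op j (fun a' b' a b => s a' a * delta b' b).
Proof.
move=> hj; apply/ffunP => -[x y]; rewrite site_opE bond_opE site_fixed_left //.
case: (bond_fixed j x y) => //=; rewrite /delta; case: eqP => _; by rewrite ?mulr1 ?mulr0.
Qed.
Lemma site_bondr j (s : 'I_3 -> 'I_3 -> C) : nxt j != j ->
  site_op (nxt j) s = bond_op j (fun a' b' a b => delta a' a * s b' b).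
Proof.
move=> hj; apply/ffunP => -[x y]; rewrite site_opE bond_opE site_fixed_right //.
case: (bond_fixed j x y) => //=; rewrite /delta; case: eqP => _; by rewrite ?mul1r ?mul0r.
Qed.

Definition setsite x k (e : 'I_3) : cfg := [ffun i => if i == k then e else x i].

Lemma site_fixed_setsite x k e : site_fixed k (setsite x k e) x.
Proof. by apply/forallP => i; apply/implyP => hi; rewrite ffunE (negbTE hi). Qed.

(* Away from the bond, the intermediate configuration of a product of a bond
   operator and a site operator is unique. *)
Lemma bond_site_mulE j k (t : op2) s x y : k != j -> k != nxt j ->
  opmul (bond_op j t) (site_op k s) (x, y) =
  bond_op j t (x, setsite y k (x k)) * site_op k s (setsite y k (x k), y).
Proof.
move=> hk1 hk2; rewrite ffunE /=; apply: sum_supported => z hz.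
rewrite bond_opE site_opE.
case: (boolP (bond_fixed j x z)) => h1; case: (boolP (site_fixed k z y)) => h2;
  rewrite ?mul0r ?mulr0 //; case/eqP: hz; apply/ffunP => i; rewrite ffunE.
case: eqP => [->|/eqP hi]; last by apply/eqP; exact: (implyP (forallP h2 i)).
by apply/esym/eqP; apply: (implyP (forallP h1 k)); rewrite hk1 hk2.
Qed.

Lemma site_bond_mulE j k (t : op2) s x y : k != j -> k != nxt j ->
  opmul (site_op k s) (bond_op j t) (x, y) =
  site_op k s (x, setsite x k (y k)) * bond_op j t (setsite x k (y k), y).
Proof.
move=> hk1 hk2; rewrite ffunE /=; apply: sum_supported => w hw.
rewrite bond_opE site_opE.
case: (boolP (site_fixed k x w)) => h1; case: (boolP (bond_fixed j w y)) => h2;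
  rewrite ?mul0r ?mulr0 //; case/eqP: hw; apply/ffunP => i; rewrite ffunE.
case: eqP => [->|/eqP hi]; first by apply/eqP; apply: (implyP (forallP h2 k)); rewrite hk1 hk2.
by apply/esym/eqP; exact: (implyP (forallP h1 i)).
Qed.

Lemma bond_site_comm j k (t : op2) s : k != j -> k != nxt j ->
  opmul (bond_op j t) (site_op k s) = opmul (site_op k s) (bond_op j t).
Proof.
move=> hk1 hk2; apply/ffunP => -[x y].
rewrite bond_site_mulE // site_bond_mulE // !bond_opE !site_opE.
rewrite [site_fixed k _ y]site_fixed_setsite.
have -> : site_fixed k x (setsite x k (y k)).
  by apply/forallP => i; apply/implyP => hi; rewrite ffunE (negbTE hi).
have -> : bond_fixed j x (setsite y k (x k)) = bond_fixed j (setsite x k (y k)) y.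
  apply/forallP/forallP => H i; apply/implyP => hi; have := implyP (H i) hi;
  rewrite !ffunE; case: (eqVneq i k) => [->|hik]; rewrite ?eqxx ?(negbTE hik) //; exact: id.
rewrite !ffunE eqxx [j == k]eq_sym (negbTE hk1) [nxt j == k]eq_sym (negbTE hk2).
by case: (bond_fixed j (setsite x k (y k)) y); rewrite ?mulr0 ?mul0r // mulrC.
Qed.

Section EvenChain.
Hypothesis hL : ~~ odd L.

Definition sgn j : C := (-1) ^+ (nat_of_ord j).+1.

(* An even ring has at least two sites, so j+1 differs from j. *)
Lemma nxt_neq j : nxt j != j.
Proof.
apply/eqP => /(f_equal val) /=.
have := ltn_ord j; move: (nat_of_ord j) => m hm.
case: (ltnP m.+1 L) => h; first by rewrite modn_small //; lia.
have eL : L = m.+1 by apply/eqP; rewrite eqn_leq hm h.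
rewrite eL modnn => e; move: hL; by rewrite eL -e.
Qed.

Lemma sgn_nxt j : sgn (nxt j) = - sgn j.
Proof.
rewrite /sgn /nxt /=.
have := ltn_ord j; move: (nat_of_ord j) => m hm.
case: (ltnP m.+1 L) => h; first by rewrite modn_small // exprS mulN1r.
have eL : L = m.+1 by apply/eqP; rewrite eqn_leq hm h.
have ho : odd m.+1 = false by move: hL; rewrite eL => /negbTE.
by rewrite eL modnn -[(-1) ^+ m.+1]signr_odd ho expr0 expr1.
Qed.

Lemma splus1E (a b : 'I_3) : splus1 C a b = if (val a == (val b).+1)%N then sqrtC 2 else 0.
Proof. case3 a; case3 b; rewrite /splus1 /= //; congr sqrtC; ring. Qed.

Lemma splus1_sq (a c : 'I_3) : \sum_(e < 3) splus1 C a e * splus1 C e c = Qsite a c.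
Proof.
have s2 : sqrtC 2 * sqrtC 2 = 2 :> C by rewrite -expr2 sqrtCK.
rewrite sum3 !splus1E /Qsite; case3 a; case3 c; rewrite /= ?mulr0 ?mul0r ?addr0 ?add0r ?s2 //.
Qed.

Lemma Splus_sq k : opmul (Splus C k) (Splus C k) = site_op k Qsite.
Proof.
rewrite /Splus !site_bondl ?nxt_neq // bond_mul ?nxt_neq //.
apply: bond_op_ext => a b c d; rewrite /mul2 !sum3 -splus1_sq sum3 /delta.
case3 b; case3 d; rewrite /=; ring.
Qed.

Lemma PaE : Pa C L = \sum_(k < L) opscale (sgn k) (site_op k Qsite).
Proof. by rewrite /Pa; apply: eq_bigr => k _; rewrite Splus_sq. Qed.

(* Only the two sites of a bond fail to commute with it, and by the
   alternation of signs they contribute sgn j [t, D]. *)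
Lemma comm_bond_Pa j (t : op2) : comm (bond_op j t) (Pa C L) = bond_op j (adD (sgn j) t).
Proof.
rewrite PaE comm_sumr_scale (bigD1 j) // (bigD1 (nxt j)) /=; last by rewrite nxt_neq.
rewrite big1 ?addr0; last first.
  move=> k /andP [h1 h2]; rewrite /comm bond_site_comm // subrr.
  by apply/ffunP => p; rewrite !ffunE mulr0.
rewrite sgn_nxt /comm site_bondl ?nxt_neq // site_bondr ?nxt_neq // !bond_mul ?nxt_neq //.
rewrite !bond_opB !bond_opZ bond_opD; apply: bond_op_ext => a b c d.
rewrite /adD /opscale2 /mul2 /Dbond !sum3; ring.
Qed.

Lemma comm_bonds_Pa (t : 'I_L -> op2) :
  comm (\sum_(j < L) bond_op j (t j)) (Pa C L) = \sum_(j < L) bond_op j (adD (sgn j) (t j)).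
Proof. by rewrite comm_suml; apply: eq_bigr => j _; rewrite comm_bond_Pa. Qed.

Lemma bonds_Dbond : \sum_(j < L) bond_op j (opscale2 (sgn j) Dbond) = Pa C L + Pa C L.
Proof.
have split_bond j : bond_op j (opscale2 (sgn j) Dbond) =
    opscale (sgn j) (site_op j Qsite) + opscale (sgn (nxt j)) (site_op (nxt j) Qsite).
  rewrite sgn_nxt site_bondl ?nxt_neq // site_bondr ?nxt_neq // !bond_opZ bond_opD.
  by apply: bond_op_ext => a b c d; rewrite /opscale2 /Dbond; ring.
under eq_bigr do rewrite split_bond.
rewrite big_split /= PaE; congr (_ + _).
by rewrite [RHS](reindex_inj (@ordS_inj L)) /nxt.
Qed.

Lemma bonds_Dbond_scaled E v : stscale (2 * E) (opapp (Pa C L) v) =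
  opapp (\sum_(j < L) bond_op j (opscale2 (sgn j * E) Dbond)) v.
Proof.
have scale_bond j :
    bond_op j (opscale2 (sgn j * E) Dbond) = opscale E (bond_op j (opscale2 (sgn j) Dbond)).
  by rewrite bond_opZ; apply: bond_op_ext => a b c d; rewrite /opscale2; ring.
rewrite opapp_suml; under eq_bigr do rewrite scale_bond opappZl.
rewrite -stscale_sum -opapp_suml bonds_Dbond opappDl.
by apply/ffunP => x; rewrite !ffunE; ring.
Qed.

Section GroundState.
Variable G : state.
Hypothesis hG : AKLT_gs G.

(* A bond operator killing the spin-0/1 states of its bond factors through
   the spin-2 projectors, hence kills the AKLT state. *)
Lemma bond_op_kills_G j (t : op2) :
  (forall i, (i < 4)%N -> app2 t (low i) = zero2) -> opapp (bond_op j t) G = 0.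
Proof.
move=> ht; rewrite (op2_spin2_expansion ht) -bond_op_sum opapp_suml big1 // => K _.
rewrite -(outer2_spin2_proj _ (ltn_ord K)) -bond_mul ?nxt_neq // opapp_mul.
by rewrite (hG j K) opapp0r.
Qed.

Lemma bonds_kill_G (t : 'I_L -> op2) :
  (forall j i, (i < 4)%N -> app2 (t j) (low i) = zero2) ->
  opapp (\sum_(j < L) bond_op j (t j)) G = 0.
Proof. by move=> ht; rewrite opapp_suml big1 // => j _; apply/bond_op_kills_G/ht. Qed.

Lemma bonds_agree_on_G (t u : 'I_L -> op2) :
  (forall j i, (i < 4)%N -> app2 (t j) (low i) = app2 (u j) (low i)) ->
  opapp (\sum_(j < L) bond_op j (t j)) G = opapp (\sum_(j < L) bond_op j (u j)) G.
Proof.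
move=> htu; apply/eqP; rewrite -subr_eq0 -opappBl -sumrB; apply/eqP.
under eq_bigr do rewrite bond_opB.
apply: bonds_kill_G => j i hi; rewrite app2_subl htu //.
by rewrite /sub2 /zero2; funext_all; rewrite subrr.
Qed.
End GroundState.
End EvenChain.

Section Tower.
Variables (H P : op) (G : state) (c : C).
Hypothesis H_G : opapp H G = 0.
Hypothesis comm1_G : opapp (comm H P) G = stscale c (opapp P G).
Hypothesis comm2_G : opapp (comm (comm H P) P) G = 0.
Hypothesis comm3 : comm (comm (comm H P) P) P = 0.

Lemma comm2_iter n : opapp (comm (comm H P) P) (iter n (opapp P) G) = 0.
Proof.
elim: n => [|n IH] //=.
by rewrite opapp_swap IH opapp0r add0r comm3 opapp0l.
Qed.

Lemma comm1_iter n :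
  opapp (comm H P) (iter n (opapp P) G) = stscale c (iter n.+1 (opapp P) G).
Proof.
elim: n => [|n IH] //=.
by rewrite opapp_swap IH comm2_iter addr0 opappZr.
Qed.

Lemma H_iter n : opapp H (iter n (opapp P) G) = stscale (n%:R * c) (iter n (opapp P) G).
Proof.
elim: n => [|n IH] /=.
  by rewrite H_G; apply/ffunP => x; rewrite !ffunE !mul0r.
rewrite opapp_swap IH opappZr comm1_iter.
by apply/ffunP => x; rewrite !ffunE -natr1; ring.
Qed.
End Tower.

(* The Hamiltonian of the statement as a sum of copies of hloc: the
   couplings are rescaled by the normalisations of the spin-2 states. *)
Definition hcoupling (z : 'I_L -> 'I_3 -> 'I_3 -> C) j (a b : 'I_3) : C :=
  z j a b * J2_scale a * (J2_scale b)^*.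

Lemma ord3_lt5 (a : 'I_3) : (a < 5)%N.
Proof. exact: (leq_trans (ltn_ord a)). Qed.

Lemma Ham_bonds E z : Ham E z = \sum_(j < L) bond_op j (hloc E (hcoupling z j)).
Proof.
rewrite /Ham; apply: eq_bigr => j _; rewrite /hbond bond_opD bond_opZ.
under eq_bigr do under eq_bigr do rewrite bond_opZ.
under eq_bigr do rewrite bond_op_sum.
rewrite bond_op_sum bond_opD; apply: bond_op_ext => x1 x2 y1 y2.
rewrite /hloc /opscale2 (ketbra_J2 (isT : (3 < 5)%N)) (ketbra_J2 (isT : (4 < 5)%N)).
congr (_ + _); first by rewrite /spin2_norm; ring.
apply: eq_bigr => a _; apply: eq_bigr => b _.
rewrite /ketbra !J2_spin2 ?ord3_lt5 // rmorphM /= /spin2 conjC_nat /hcoupling; ring.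
Qed.
End Chain.
End SpinOneChain.

Theorem mainTheorem8 (C : numClosedFieldType) (L : nat) (hL : ~~ odd L)
  (E : C) (hE : E \is Num.real)
  (z : 'I_L -> 'I_3 -> 'I_3 -> C)
  (hz : forall j a b, z j a b = (z j b a)^*)
  (G : state C L) (hG : AKLT_gs G) :
  let H := Ham E z in
  let P := Pa C L in
  [/\ opapp H G = 0,
      opapp (comm H P) G = stscale (2 * E) (opapp P G),
      opapp (comm (comm H P) P) G = 0,
      comm (comm (comm H P) P) P = 0
    & forall n : nat,
        opapp H (iter n (opapp P) G) = stscale (2 * n%:R * E) (iter n (opapp P) G)].
Proof.
move=> H P; pose h j := hloc E (hcoupling z j).
have H_bonds : H = \sum_(j < L) bond_op j (h j) by exact: Ham_bonds.
have comm1 : comm H P = \sum_(j < L) bond_op j (adD (sgn C j) (h j)).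
  by rewrite H_bonds comm_bonds_Pa.
have comm2 : comm (comm H P) P = \sum_(j < L) bond_op j (adD (sgn C j) (adD (sgn C j) (h j))).
  by rewrite comm1 comm_bonds_Pa.
have H_G : opapp H G = 0.
  by rewrite H_bonds; apply: bonds_kill_G => // j i hi; apply: hloc_low.
have comm1_G : opapp (comm H P) G = stscale (2 * E) (opapp P G).
  rewrite comm1 bonds_Dbond_scaled //; apply: bonds_agree_on_G => // j i hi.
  exact: adD_hloc_low.
have comm2_G : opapp (comm (comm H P) P) G = 0.
  by rewrite comm2; apply: bonds_kill_G => // j i hi; apply: adD2_hloc_low.
have comm3 : comm (comm (comm H P) P) P = 0.
  rewrite comm2 comm_bonds_Pa // big1 // => j _.
  by rewrite adD3_hloc bond_op0.
split=> // n; rewrite (_ : 2 * n%:R * E = n%:R * (2 * E)); last by ring.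
exact: H_iter.
Qed.
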